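(* Let $C$ be a program of the probabilistic guarded command language pProgs, let $k\in\mathbb{R}_{\geq 0}$ with $\mathbf{k}=\lambda\sigma.\,k$ the corresponding constant run-time, let $r\in\mathbb{R}_{\geq 0}$, and let $f,g\in\mathbb{T}$ be run-times. Then: (1) (Monotonicity) $f\preceq g$ implies $\mathsf{ert}[C](f)\preceq\mathsf{ert}[C](g)$; (2) (Propagation of constants) if $C$ is $\mathtt{halt}$-free, then $\mathsf{ert}[C](\mathbf{k}+f)=\mathbf{k}+\mathsf{ert}[C](f)$; (3) (Preservation of $\infty$) if $C$ is $\mathtt{halt}$-free, then $\mathsf{ert}[C](\boldsymbol{\infty})=\boldsymbol{\infty}$, where $\boldsymbol{\infty}=\lambda\sigma.\,\infty$; (4) (Sub-additivity) if $C$ is fully probabilistic (contains no non-deterministic choice $\{C_1\}\,\square\,\{C_2\}$), then $\mathsf{ert}[C](f+g)\preceq\mathsf{ert}[C](f)+\mathsf{ert}[C](g)$; (5) (Scaling) $\mathsf{ert}[C](r\cdot f)\succeq\min\{1,r\}\cdot\mathsf{ert}[C](f)$ and $\mathsf{ert}[C](r\cdot f)\preceq\max\{1,r\}\cdot\mathsf{ert}[C](f)$.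
   Context: Programs $C\in$ pProgs are generated by the grammar $C ::= \mathtt{empty} \mid \mathtt{skip} \mid \mathtt{halt} \mid x :\approx \mu \mid C;C \mid \{C\}\,\square\,\{C\} \mid \mathtt{if}\,(\xi)\,\{C\}\,\mathtt{else}\,\{C\} \mid \mathtt{while}\,(\xi)\,\{C\}$, where $x$ is a program variable, $\mu$ a distribution expression and $\xi$ a distribution expression over truth values (probabilistic guard). A program state $\sigma$ maps program variables to values; $\Sigma$ is the set of states. Each distribution expression $\mu$ has an interpretation $[\![\mu]\!]:\Sigma\to\mathcal{D}(\mathsf{Vals})$ assigning to each state a discrete probability distribution of total mass 1 over values; $[\mu:v](\sigma)$ denotes the probability that $[\![\mu]\!](\sigma)$ assigns to $v$, so $[\xi:\mathsf{false}]=1-[\xi:\mathsf{true}]$. Run-times are the functions $\mathbb{T}=\{f\mid f:\Sigma\to\mathbb{R}_{\geq0}\cup\{\infty\}\}$, ordered pointwise by $f\preceq g$ iff $f(\sigma)\le g(\sigma)$ for all $\sigma$; arithmetic on run-times is pointwise (with $0\cdot\infty=0$). The expected run-time transformer $\mathsf{ert}[C]:\mathbb{T}\to\mathbb{T}$ is defined by: $\mathsf{ert}[\mathtt{empty}](f)=f$; $\mathsf{ert}[\mathtt{skip}](f)=\mathbf{1}+f$; $\mathsf{ert}[\mathtt{halt}](f)=\mathbf{0}$; $\mathsf{ert}[x:\approx\mu](f)=\mathbf{1}+\lambda\sigma.\sum_v [\![\mu]\!](\sigma)(v)\cdot f(\sigma[x/v])$; $\mathsf{ert}[C_1;C_2](f)=\mathsf{ert}[C_1](\mathsf{ert}[C_2](f))$;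 $\mathsf{ert}[\{C_1\}\square\{C_2\}](f)=\max\{\mathsf{ert}[C_1](f),\mathsf{ert}[C_2](f)\}$ (pointwise); $\mathsf{ert}[\mathtt{if}(\xi)\{C_1\}\mathtt{else}\{C_2\}](f)=\mathbf{1}+[\xi:\mathsf{true}]\cdot\mathsf{ert}[C_1](f)+[\xi:\mathsf{false}]\cdot\mathsf{ert}[C_2](f)$; $\mathsf{ert}[\mathtt{while}(\xi)\{C'\}](f)=\mathrm{lfp}\,X.\ \mathbf{1}+[\xi:\mathsf{false}]\cdot f+[\xi:\mathsf{true}]\cdot\mathsf{ert}[C'](X)$ (least fixed point w.r.t. $\preceq$). Here $\mathbf{c}=\lambda\sigma.\,c$ denotes a constant run-time. *)

From HB Require Import structures.
From mathcomp Require Import all_boot all_order all_algebra.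
From mathcomp Require Import all_classical all_reals.
From mathcomp Require Import ereal esum.
Set Implicit Arguments. Unset Strict Implicit. Unset Printing Implicit Defensive.
Import Order.TTheory GRing.Theory Num.Theory.
Local Open Scope ring_scope.
Local Open Scope classical_set_scope.

Record distr (R : realType) (T : choiceType) := Distr {
  pmf : T -> R;
  pmf_ge0 : forall t, 0 <= pmf t;
  pmf_sum1 : (\esum_(t in [set: T]) (pmf t)%:E = 1)%E }.

Section Syntax.
Variables (R : realType) (Var : eqType) (Val : choiceType).

Definition state := Var -> Val.

Definition upd (s : state) (x : Var) (v : Val) : state :=
  fun y => if y == x then v else s y.

(* Distribution expressions are identified with their interpretations
   [[mu]] : Sigma -> D(Vals); guards are distribution expressions over bool. *)
Inductive prog : Type :=
  | Empty
  | Skip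
  | Halt
  | Assign of Var & (state -> distr R Val)
  | Seq of prog & prog
  | Choice of prog & prog
  | Ite of (state -> distr R bool) & prog & prog
  | While of (state -> distr R bool) & prog.

(* run-times (intended to be nonnegative): Sigma -> [0, +oo] *)
Definition runtime := state -> \bar R.

(* least fixed point w.r.t. the pointwise order on run-times (Knaster-Tarski:
   pointwise infimum of all pre-fixed run-times) *)
Definition lfp (Phi : runtime -> runtime) : runtime :=
  fun s => ereal_inf [set X s | X in
    [set X : runtime | (forall t, (0 <= X t)%E) /\ (forall t, (Phi X t <= X t)%E)]].

Local Open Scope ereal_scope.

Fixpoint ert (C : prog) (f : runtime) {struct C} : runtime :=
  match C with
  | Empty => f
  | Skip => fun s => 1 + f s
  | Halt => fun _ => 0
  | Assign x mu => fun s =>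
      1 + \esum_(v in [set: Val]) ((pmf (mu s) v)%:E * f (upd s x v))
  | Seq C1 C2 => ert C1 (ert C2 f)
  | Choice C1 C2 => fun s => maxe (ert C1 f s) (ert C2 f s)
  | Ite xi C1 C2 => fun s =>
      1 + (pmf (xi s) true)%:E * ert C1 f s + (pmf (xi s) false)%:E * ert C2 f s
  | While xi C' =>
      lfp (fun X s => 1 + (pmf (xi s) false)%:E * f s
                        + (pmf (xi s) true)%:E * ert C' X s)
  end.

Fixpoint halt_free (C : prog) : bool :=
  match C with
  | Empty | Skip | Assign _ _ => true
  | Halt => false
  | Seq C1 C2 | Choice C1 C2 | Ite _ C1 C2 => halt_free C1 && halt_free C2
  | While _ C' => halt_free C'
  end.

Fixpoint fully_probabilistic (C : prog) : bool :=
  match C with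
  | Empty | Skip | Halt | Assign _ _ => true
  | Choice _ _ => false
  | Seq C1 C2 | Ite _ C1 C2 => fully_probabilistic C1 && fully_probabilistic C2
  | While _ C' => fully_probabilistic C'
  end.

End Syntax.

(* The loop cases are the heart of the matter: ert of a while loop is the
   infimum of the nonnegative pre-fixed points of its characteristic
   function, so each property is transported through the loop by mapping
   pre-fixed points to pre-fixed points (X |-> k + X, X |-> b * X,
   (X, Y) |-> X + Y).  For propagation of constants the converse direction
   needs that every pre-fixed point of a halt-free loop whose post run-time
   is at least k is itself at least k: otherwise its infimum m < k would
   satisfy m + 1 <= m, because a halt-free body keeps constant lower bounds
   and every iteration costs one step.  The same fact, for every k at
   once, gives preservation of infinity.  The lower scaling bound follows
   from the upper one applied with the reciprocal factor. *)

From HB Require Import structures.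
From mathcomp Require Import all_boot all_order all_algebra.
From mathcomp Require Import all_classical all_reals.
From mathcomp Require Import ereal esum.
From mathcomp Require Import lra.
Import Order.TTheory GRing.Theory Num.Theory.
Local Open Scope ring_scope.

Section ExtendedArithmetic.
Local Open Scope ereal_scope.
Context {R : realType}.
Implicit Types (p q a b k : R) (A B X Y : \bar R).

Lemma ge0_esumZl (T : choiceType) (S : set T) c (F : T -> \bar R) :
  (0 <= c)%R -> (forall x, 0 <= F x) ->
  \esum_(i in S) (c%:E * F i) = c%:E * \esum_(i in S) F i.
Proof.
move=> c0 F0; rewrite /esum -ereal_supZl //; last first.
  by apply/set0P; exists 0; exists set0; [exact: fsets_set0|rewrite fsbig_set0].
congr ereal_sup; rewrite image_comp; apply: eq_imagel => A _ /=.
by rewrite ge0_mule_fsumr.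
Qed.

Lemma combDl p q k A B : (0 <= p)%R -> (0 <= q)%R -> (p + q = 1)%R ->
  (0 <= k)%R -> 0 <= A -> 0 <= B ->
  1 + p%:E * (k%:E + A) + q%:E * (k%:E + B) = k%:E + (1 + p%:E * A + q%:E * B).
Proof.
move=> p0 q0 pq k0 A0 B0; rewrite !ge0_muleDr ?lee_fin // -!EFinM.
rewrite (addeCA 1) -addeA (addeCA (1 + _)) addeA -EFinD -mulrDl pq mul1r.
by rewrite addeA.
Qed.

Lemma comb_cst p q k : (p + q = 1)%R -> p%:E * k%:E + q%:E * k%:E = k%:E.
Proof. by move=> pq; rewrite -!EFinM -EFinD -mulrDl pq mul1r. Qed.

Lemma combD_le p q A B X Y : (0 <= p)%R -> (0 <= q)%R ->
  0 <= A -> 0 <= B -> 0 <= X -> 0 <= Y ->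
  1 + p%:E * (A + B) + q%:E * (X + Y)
    <= (1 + p%:E * A + q%:E * X) + (1 + p%:E * B + q%:E * Y).
Proof.
move=> p0 q0 A0 B0 X0 Y0; rewrite !ge0_muleDr ?lee_fin // [1 + (_ + _)]addeA.
by rewrite [X in X <= _]addeACA; apply: leeD2l; rewrite -addeA lee_paddl.
Qed.

Lemma oneD_le A B : 0 <= A -> 0 <= B -> 1 + (A + B) <= (1 + A) + (1 + B).
Proof. by move=> A0 B0; rewrite addeACA; apply: leeD2r; rewrite leeDl. Qed.

Lemma mule_combDr a p q A B : (0 <= a)%R -> (0 <= p)%R -> (0 <= q)%R ->
  0 <= A -> 0 <= B ->
  a%:E * (1 + p%:E * A + q%:E * B) = a%:E + p%:E * (a%:E * A) + q%:E * (a%:E * B).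
Proof.
move=> a0 p0 q0 A0 B0.
by rewrite !ge0_muleDr ?mule1 ?(muleCA a%:E) ?adde_ge0 ?mule_ge0.
Qed.

Lemma ge0_fin_or_y {x : \bar R} : 0 <= x -> x = +oo \/ x \is a fin_num.
Proof. by case: x => [r| |] //= _; [right|left]. Qed.

Lemma fin_lb_eqy A : (forall k, (0 <= k)%R -> k%:E <= A) -> A = +oo.
Proof.
case: A => [r | // | ] h; last by have := h 0%R (lexx _).
have r1 : (r < `|r| + 1)%R by rewrite (le_lt_trans (ler_norm r)) // ltrDl.
by have := h _ (addr_ge0 (normr_ge0 r) ler01); rewrite lee_fin leNgt r1.
Qed.

End ExtendedArithmetic.

Section Distributions.
Local Open Scope ereal_scope.
Context {R : realType}.

Lemma pmf_bool (d : distr R bool) : (pmf d true + pmf d false = 1)%R.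
Proof.
have := pmf_sum1 d.
rewrite (_ : setT = ([set true] `|` [set false])%classic); last first.
  by apply/seteqP; split => -[] //=; [left|right].
rewrite esum_fset; last 2 first.
- exact: finite_finset.
- by move=> i _; rewrite lee_fin pmf_ge0.
rewrite fsbigU ?fsbig_set1 //; try exact: finite_finset.
  by move=> h; apply: EFin_inj; rewrite EFinD; exact: h.
by move=> x [/= ->].
Qed.

Lemma pmf_boolC (d : distr R bool) : (pmf d false + pmf d true = 1)%R.
Proof. by rewrite addrC pmf_bool. Qed.

Lemma esum_pmf_cst {T : choiceType} (d : distr R T) (k : R) : (0 <= k)%R ->
  \esum_(v in [set: T]) ((pmf d v)%:E * k%:E) = k%:E.
Proof.
move=> k0; under eq_esum do rewrite muleC.
by rewrite ge0_esumZl ?pmf_sum1 ?mule1 // => v; rewrite lee_fin pmf_ge0.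
Qed.

End Distributions.

Section ExpectedRuntime.
Local Open Scope ereal_scope.
Variables (R : realType) (Var : eqType) (Val : choiceType).
Local Notation rt := (runtime R Var Val).
Local Notation prog := (prog R Var Val).
Implicit Types (C : prog) (f g X Y : rt) (Phi Psi : rt -> rt).

Definition prefixpoint (Phi : rt -> rt) X :=
  (forall t, 0 <= X t) /\ (forall t, Phi X t <= X t).

Lemma lfp_le_prefix Phi X s : prefixpoint Phi X -> lfp Phi s <= X s.
Proof. by move=> [X0 PhiX]; apply: ereal_inf_lbound; exists X. Qed.

Lemma lfp_ge_prefix Phi c s :
  (forall X, prefixpoint Phi X -> c <= X s) -> c <= lfp Phi s.
Proof. by move=> h; apply: le_ereal_inf_tmp => _ [X HX <-]; exact: h. Qed.

Lemma lfp_ge0 Phi s : 0 <= lfp Phi s.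
Proof. by apply: lfp_ge_prefix => X []. Qed.

Lemma lfp_geDl Phi (a : R) c s :
  (forall X, prefixpoint Phi X -> c <= a%:E + X s) -> c <= a%:E + lfp Phi s.
Proof.
move=> h; have [->|fin] := ge0_fin_or_y (lfp_ge0 Phi s); first by rewrite addey ?leey.
rewrite -lee_subel_addl //; apply: lfp_ge_prefix => X HX.
have [->|finX] := ge0_fin_or_y (proj1 HX s); first exact: leey.
by rewrite lee_subel_addl //; exact: h.
Qed.

Lemma lfp_geD Phi Psi c s :
  (forall X Y, prefixpoint Phi X -> prefixpoint Psi Y -> c <= X s + Y s) ->
  c <= lfp Phi s + lfp Psi s.
Proof.
move=> h; have [->|fin] := ge0_fin_or_y (lfp_ge0 Phi s).
  by rewrite addye ?leey // gt_eqF // (lt_le_trans _ (lfp_ge0 Psi s)) ?ltNy0.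
rewrite -(fineK fin); apply: lfp_geDl => Y HY; rewrite fineK //.
have [->|finY] := ge0_fin_or_y (proj1 HY s).
  by case/fin_numP: fin => ? _; rewrite addey ?leey.
rewrite addeC -(fineK finY); apply: lfp_geDl => X HX.
by rewrite fineK // addeC; exact: h.
Qed.

Definition while_char (xi : state Var Val -> distr R bool) C f : rt -> rt :=
  fun X s => 1 + (pmf (xi s) false)%:E * f s + (pmf (xi s) true)%:E * ert C X s.

Lemma ert_ge0 C f : (forall s, 0 <= f s) -> forall s, 0 <= ert C f s.
Proof.
elim: C f => [||| x mu | C1 IH1 C2 IH2 | C1 IH1 C2 IH2 | xi C1 IH1 C2 IH2 | xi C IH]
  f f0 s /=.
- exact: f0.
- by rewrite adde_ge0.
- by [].
- by rewrite adde_ge0 // esum_ge0 // => v _; rewrite mule_ge0 ?lee_fin ?pmf_ge0.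
- by apply: IH1; apply: IH2.
- by rewrite le_max IH1.
- by rewrite !adde_ge0 // mule_ge0 ?lee_fin ?pmf_ge0 // ?IH1 ?IH2.
- exact: lfp_ge0.
Qed.

Lemma ert_mono C f g : (forall s, f s <= g s) -> forall s, ert C f s <= ert C g s.
Proof.
elim: C f g => [||| x mu | C1 IH1 C2 IH2 | C1 IH1 C2 IH2 | xi C1 IH1 C2 IH2 | xi C IH]
  f g fg s /=.
- exact: fg.
- by rewrite leeD2l.
- by [].
- rewrite leeD2l // le_esum // => v _.
  by rewrite lee_wpmul2l ?lee_fin ?pmf_ge0.
- by apply: IH1; apply: IH2.
- by rewrite ge_max !le_max IH1 // IH2 // orbT.
- by rewrite leeD // ?leeD2l // lee_wpmul2l ?lee_fin ?pmf_ge0 // ?IH1 ?IH2.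
- apply: lfp_ge_prefix => X [X0 HX]; apply: lfp_le_prefix; split => // t.
  apply: le_trans (HX t); rewrite /while_char leeD2r // leeD2l //.
  by rewrite lee_wpmul2l ?lee_fin ?pmf_ge0.
Qed.

Definition keeps_cst_lb (F : rt -> rt) :=
  forall (k : R) X, (0 <= k)%R -> (forall t, k%:E <= X t) -> forall t, k%:E <= F X t.

Lemma while_prefixpoint_ge xi C f (k : R) X : keeps_cst_lb (ert C) ->
  (0 <= k)%R -> (forall t, k%:E <= f t) ->
  prefixpoint (while_char xi C f) X -> forall t, k%:E <= X t.
Proof.
move=> lbC k0 kf [X0 HX].
pose m := ereal_inf (range X).
have mX t : m <= X t by apply: ereal_inf_lbound; exists t.
suff : k%:E <= m by move=> km t; exact: le_trans (mX t).
rewrite leNgt; apply/negP => mk.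
have m0 : 0 <= m by apply: le_ereal_inf_tmp => _ [t _ <-].
have mE : m = (fine m)%:E by rewrite fineK // ge0_fin_numE // (lt_trans mk) ?ltry.
have ertm t : m <= ert C X t.
  by rewrite mE; apply: lbC => // [|u]; rewrite -?mE // -lee_fin -mE.
have m1X t : m + 1 <= X t.
  apply: le_trans (HX t); rewrite /while_char mE -(comb_cst _ _ (fine m) (pmf_boolC (xi t))).
  rewrite -mE addeC addeA; apply: leeD; last first.
    by rewrite lee_wpmul2l ?lee_fin ?pmf_ge0.
  rewrite leeD2l // lee_wpmul2l ?lee_fin ?pmf_ge0 //.
  by apply: le_trans (kf t); exact: ltW.
have : m + 1 <= m by apply: le_ereal_inf_tmp => _ [t _ <-]; exact: m1X.
by rewrite mE -EFinD lee_fin; lra.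
Qed.

Lemma ert_keeps_cst_lb C : halt_free C -> keeps_cst_lb (ert C).
Proof.
elim: C => [||| x mu | C1 IH1 C2 IH2 | C1 IH1 C2 IH2 | xi C1 IH1 C2 IH2 | xi C IH]
  //= hf k X k0 kX t /=.
- exact: kX.
- exact: lee_paddl lee01 (kX t).
- rewrite -(esum_pmf_cst (mu t) _ k0); apply: lee_paddl lee01 _.
  by rewrite le_esum // => v _; rewrite lee_wpmul2l ?lee_fin ?pmf_ge0.
- by case/andP: hf => h1 h2; apply: IH1 => // u; exact: IH2.
- by case/andP: hf => h1 h2; rewrite le_max IH1.
- case/andP: hf => h1 h2; rewrite -(comb_cst _ _ k (pmf_bool (xi t))) -addeA.
  apply: lee_paddl lee01 _.
  by rewrite leeD // lee_wpmul2l ?lee_fin ?pmf_ge0 // ?IH1 ?IH2.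
- apply: lfp_ge_prefix => Y HY; exact: while_prefixpoint_ge (IH hf) k0 kX HY t.
Qed.

Lemma ert_cstD C (k : R) f : halt_free C -> (0 <= k)%R -> (forall s, 0 <= f s) ->
  ert C (fun s => k%:E + f s) = (fun s => k%:E + ert C f s).
Proof.
elim: C k f => [||| x mu | C1 IH1 C2 IH2 | C1 IH1 C2 IH2 | xi C1 IH1 C2 IH2 | xi C IH]
  /= k f hf k0 f0 //; apply/funext => s.
- by rewrite addeCA.
- under eq_esum do rewrite ge0_muleDr ?lee_fin ?pmf_ge0 //.
  rewrite esumD => [|v _|v _]; last 2 first.
  + by rewrite mule_ge0 ?lee_fin ?pmf_ge0.
  + by rewrite mule_ge0 ?lee_fin ?pmf_ge0.
  by rewrite esum_pmf_cst // addeCA.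
- by case/andP: hf => h1 h2; rewrite IH2 // IH1 // => t; exact: ert_ge0.
- by case/andP: hf => h1 h2; rewrite IH1 // IH2 // adde_maxr.
- case/andP: hf => h1 h2.
  by rewrite IH1 // IH2 // combDl ?pmf_ge0 ?pmf_bool ?ert_ge0.
- apply/eqP; rewrite eq_le; apply/andP; split.
  + apply: lfp_geDl => Y [Y0 HY].
    apply: (@lfp_le_prefix _ (fun t => k%:E + Y t)); split => t.
      by rewrite adde_ge0.
    rewrite /while_char IH // combDl ?pmf_ge0 ?pmf_boolC ?ert_ge0 //.
    by rewrite leeD2l.
  + apply: lfp_ge_prefix => X HX.
    have kX : forall t, k%:E <= X t.
      exact: while_prefixpoint_ge (ert_keeps_cst_lb _ hf) k0 (fun t => leeDl _ (f0 t)) HX.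
    have XkY : X = (fun t => k%:E + (X t - k%:E)).
      by apply/funext => t; rewrite addeC subeK.
    have Y0 t : 0 <= X t - k%:E by rewrite sube_ge0 ?kX.
    move: HX; rewrite XkY => -[_ HX].
    apply: leeD2l; apply: (@lfp_le_prefix _ (fun t => X t - k%:E)); split => // t.
    by have := HX t; rewrite IH //= combDl ?pmf_ge0 ?pmf_boolC ?ert_ge0 // leeD2lE.
Qed.

Lemma ert_infty C : halt_free C -> ert C (fun _ => +oo) = (fun _ => +oo).
Proof.
move=> hf; apply/funext => s; apply: fin_lb_eqy => k k0.
by apply: ert_keeps_cst_lb => // t; exact: leey.
Qed.

Lemma ert_subadd C f g : fully_probabilistic C ->
  (forall s, 0 <= f s) -> (forall s, 0 <= g s) ->
  forall s, ert C (fun t => f t + g t) s <= ert C f s + ert C g s.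
Proof.
elim: C f g => [||| x mu | C1 IH1 C2 IH2 | C1 IH1 C2 IH2 | xi C1 IH1 C2 IH2 | xi C IH]
  /= f g hf f0 g0 s //.
- exact: oneD_le.
- by rewrite adde0.
- under eq_esum do rewrite ge0_muleDr ?lee_fin ?pmf_ge0 //.
  rewrite esumD => [|v _|v _]; last 2 first.
  + by rewrite mule_ge0 ?lee_fin ?pmf_ge0.
  + by rewrite mule_ge0 ?lee_fin ?pmf_ge0.
  by apply: oneD_le; apply: esum_ge0 => v _; rewrite mule_ge0 ?lee_fin ?pmf_ge0.
- case/andP: hf => h1 h2.
  apply: (le_trans _ (IH1 _ _ h1 (ert_ge0 C2 _ f0) (ert_ge0 C2 _ g0) s)).
  by apply: ert_mono => t; exact: IH2.
- case/andP: hf => h1 h2.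
  apply: (le_trans _ (combD_le _ _ _ _ _ _ _ _ _ _ _ _)); rewrite ?pmf_ge0 ?ert_ge0 //.
  rewrite leeD ?leeD2l // lee_wpmul2l ?lee_fin ?pmf_ge0 //; first exact: IH1.
  exact: IH2.
- apply: lfp_geD => X Y [X0 HX] [Y0 HY].
  apply: (@lfp_le_prefix _ (fun t => X t + Y t)); split => t; first by rewrite adde_ge0.
  apply: le_trans (leeD (HX t) (HY t)); rewrite /while_char.
  apply: (le_trans _ (combD_le _ _ _ _ _ _ _ _ _ _ _ _)); rewrite ?pmf_ge0 ?ert_ge0 //.
  by rewrite leeD2l // lee_wpmul2l ?lee_fin ?pmf_ge0 ?IH.
Qed.

Lemma ert_scale_le C (b r : R) f : (0 <= r)%R -> (r <= b)%R -> (1 <= b)%R ->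
  (forall s, 0 <= f s) -> forall s, ert C (fun t => r%:E * f t) s <= b%:E * ert C f s.
Proof.
move=> + + b1; have b0 : (0 <= b)%R by apply: le_trans b1.
elim: C r f => [||| x mu | C1 IH1 C2 IH2 | C1 IH1 C2 IH2 | xi C1 IH1 C2 IH2 | xi C IH]
  /= r f r0 rb f0 s;
  have rfb (y : \bar R) : 0 <= y -> r%:E * y <= b%:E * y by move=> y0; rewrite lee_wpmul2r.
- by rewrite rfb.
- by rewrite ge0_muleDr // mule1 leeD ?lee_fin // rfb.
- by rewrite mule0.
- rewrite ge0_muleDr ?esum_ge0 // => [|v _]; last by rewrite mule_ge0 ?lee_fin ?pmf_ge0.
  rewrite mule1 leeD ?lee_fin // -ge0_esumZl // => [|v]; last first.
    by rewrite mule_ge0 ?lee_fin ?pmf_ge0.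
  apply: le_esum => v _; rewrite [leRHS]muleCA.
  by rewrite lee_wpmul2l ?lee_fin ?pmf_ge0 ?rfb.
- apply: (le_trans _ (IH1 b _ b0 (lexx b) (ert_ge0 C2 _ f0) s)).
  by apply: ert_mono => t; exact: IH2.
- by rewrite maxe_pMr ?lee_fin // ge_max !le_max IH1 // IH2 // orbT.
- by rewrite mule_combDr ?pmf_ge0 ?ert_ge0 // !leeD ?lee_fin // lee_wpmul2l ?lee_fin
    ?pmf_ge0 ?IH1 ?IH2.
- have bpos : (0 < b)%R by apply: lt_le_trans b1.
  rewrite -lee_pdivrMl //; apply: lfp_ge_prefix => Y [Y0 HY].
  rewrite lee_pdivrMl //; apply: (@lfp_le_prefix _ (fun t => b%:E * Y t)).
  split => t; first by rewrite mule_ge0 ?lee_fin.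
  apply: le_trans (lee_wpmul2l _ (HY t)); last by rewrite lee_fin.
  rewrite /while_char mule_combDr ?pmf_ge0 ?ert_ge0 // !leeD ?lee_fin //.
    by rewrite lee_wpmul2l ?lee_fin ?pmf_ge0 ?rfb.
  by rewrite lee_wpmul2l ?lee_fin ?pmf_ge0 ?IH.
Qed.

Lemma ert_scale_ge C (a r : R) f : (0 <= a)%R -> (a <= 1)%R -> (a <= r)%R ->
  (forall s, 0 <= f s) -> forall s, a%:E * ert C f s <= ert C (fun t => r%:E * f t) s.
Proof.
move=> a0 a1 ar f0 s; have [->|a_neq0] := eqVneq a 0%R.
  by rewrite mul0e ert_ge0 // => t; rewrite mule_ge0 // lee_fin (le_trans a0).
have apos : (0 < a)%R by rewrite lt_def a_neq0.
have rpos : (0 < r)%R by apply: lt_le_trans ar.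
have rf0 t : 0 <= r%:E * f t by rewrite mule_ge0 ?f0 // lee_fin ltW.
have frf : f = (fun t => r^-1%:E * (r%:E * f t)).
  by apply/funext => t; rewrite muleA -EFinM mulVf ?gt_eqF // mul1e.
rewrite -lee_pdivlMl // {1}frf; apply: ert_scale_le => //.
- by rewrite invr_ge0 ltW.
- by rewrite lef_pV2 ?posrE.
- by rewrite invf_ge1.
Qed.

End ExpectedRuntime.

Theorem theorem1 (R : realType) (Var : eqType) (Val : choiceType)
  (C : prog R Var Val) (k r : R) (f g : runtime R Var Val) :
  0 <= k -> 0 <= r ->
  (forall s, (0 <= f s)%E) -> (forall s, (0 <= g s)%E) ->
  (* (1) monotonicity *)
  ((forall s, (f s <= g s)%E) -> forall s, (ert C f s <= ert C g s)%E) /\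
  (* (2) propagation of constants *)
  (halt_free C ->
     ert C (fun s => (k%:E + f s)%E) = (fun s => (k%:E + ert C f s)%E)) /\
  (* (3) preservation of infinity *)
  (halt_free C -> ert C (fun _ => +oo%E) = (fun _ => +oo%E)) /\
  (* (4) sub-additivity *)
  (fully_probabilistic C ->
     forall s, (ert C (fun t => (f t + g t)%E) s <= ert C f s + ert C g s)%E) /\
  (* (5) scaling *)
  (forall s, ((Num.min 1 r)%:E * ert C f s <= ert C (fun t => (r%:E * f t)%E) s)%E) /\
  (forall s, (ert C (fun t => (r%:E * f t)%E) s <= (Num.max 1 r)%:E * ert C f s)%E).
Proof.
move=> k0 r0 f0 g0; split; first exact: ert_mono.
split; first by move=> hf; exact: ert_cstD.
split; first exact: ert_infty.
split; first by move=> hf; exact: ert_subadd.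
split.
- by apply: ert_scale_ge; rewrite ?le_min ?ge_min ?lexx ?ler01 ?r0 ?orbT.
- by apply: ert_scale_le; rewrite ?le_max ?lexx ?orbT.
Qed.
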